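(* For every $n\ge 3$, the polynomial $P_n(t)$ is $\gamma$-positive: writing $P_n(t)=\sum_{i=0}^{\lfloor (n-3)/2\rfloor}\gamma_i\,t^i(1+t)^{n-3-2i}$ (which is possible since $P_n$ is symmetric of degree $n-3$), all $\gamma_i$ are nonnegative integers.
   Context: For $n\ge3$, $P_n(t)\in\mathbb Z[t]$ is the polynomial with $[\overline{\mathcal M}_{0,n}]=P_n(\mathbb L)$ in the Grothendieck ring of varieties, $\mathbb L=[\mathbb A^1]$; equivalently, $P_3(t)=1$ and for $n>3$, $P_n(t)=P_{n-1}(t)(1+t)+t\sum_{i=3}^{n-2}\binom{n-2}{i-1}P_i(t)P_{n+1-i}(t)$. $P_n$ has degree $n-3$ and is palindromic. A polynomial $f(t)=\sum a_it^i$ is symmetric with center $d/2$ if $a_{d-i}=a_i$ for all $i$; such $f\in\mathbb Z[t]$ can be uniquely written $f(t)=\sum_{i=0}^{\lfloor d/2\rfloor}\gamma_i t^i(1+t)^{d-2i}$ with $\gamma_i\in\mathbb Z$, and $f$ is called $\gamma$-positive if all $\gamma_i\ge0$. *)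

From mathcomp Require Import all_boot all_order all_algebra.
Set Implicit Arguments. Unset Strict Implicit. Unset Printing Implicit Defensive.
Import GRing.Theory.
Local Open Scope ring_scope.

(* Given s = [:: P_0; ...; P_(m-1)] (with dummy P_0 = P_1 = P_2 = 0),
   compute P_m by the recursion
   P_3 = 1, P_m = P_(m-1) (1+t) + t * sum_(i=3)^(m-2) C(m-2,i-1) P_i P_(m+1-i). *)
Definition Pnext (s : seq {poly int}) : {poly int} :=
  let m := size s in
  if (m <= 2)%N then 0
  else if m == 3%N then 1
  else s`_(m.-1) * (1 + 'X)
       + 'X * \sum_(3 <= i < m.-1) ('C(m - 2, i - 1))%:R * (s`_i * s`_(m + 1 - i)).

Fixpoint Plist (m : nat) : seq {poly int} :=
  match m with
  | 0 => [::]
  | m'.+1 => rcons (Plist m') (Pnext (Plist m'))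
  end.

(* P n = P_n(t); meaningful for n >= 3, with P n = 0 for n < 3. *)
Definition P (n : nat) : {poly int} := (Plist n.+1)`_n.

Definition gamma_expansion (d : nat) (g : nat -> int) : {poly int} :=
  \sum_(i < d./2.+1) (g i)%:P * 'X^i * (1 + 'X) ^+ (d - 2 * i).

(* The polynomials that are nonnegative combinations of t^i (1+t)^(d-2i) form
   a cone that is closed under multiplication by (1+t) (raising d by 1), by t
   (raising d by 2), and under products (adding the d's).  Each term of the
   recursion for P_n is built from P_(n-1) and products P_i P_(n+1-i) by
   exactly these operations with nonnegative integer coefficients, so by
   strong induction every P_n lies in the cone with d = n-3. *)
From mathcomp Require Import all_boot all_order all_algebra.
From mathcomp Require Import zify ring.
Import GRing.Theory Num.Theory.
Local Open Scope ring_scope.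

Inductive gamma_pos (d : nat) : {poly int} -> Prop :=
| gamma_pos0 : gamma_pos d 0
| gamma_posD f h : gamma_pos d f -> gamma_pos d h -> gamma_pos d (f + h)
| gamma_pos_basis (c : int) i : 0 <= c -> (2 * i <= d)%N ->
    gamma_pos d (c%:P * 'X^i * (1 + 'X) ^+ (d - 2 * i)).

Lemma gamma_pos_sum d (I : Type) (r : seq I) (Q : pred I) (F : I -> {poly int}) :
  (forall i, Q i -> gamma_pos d (F i)) -> gamma_pos d (\sum_(i <- r | Q i) F i).
Proof.
by move=> HF; apply: big_ind => //; [exact: gamma_pos0 | exact: gamma_posD].
Qed.

Lemma gamma_pos_mul1X d f : gamma_pos d f -> gamma_pos d.+1 ((1 + 'X) * f).
Proof.
elim=> [|f1 h1 _ H1 _ H2|c i hc hi].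
- by rewrite mulr0; exact: gamma_pos0.
- by rewrite mulrDr; exact: gamma_posD.
have := @gamma_pos_basis d.+1 _ _ hc (leqW hi).
have -> : (d.+1 - 2 * i = (d - 2 * i).+1)%N by lia.
by congr gamma_pos; rewrite exprS; ring.
Qed.

Lemma gamma_pos_mulX d f : gamma_pos d f -> gamma_pos d.+2 ('X * f).
Proof.
elim=> [|f1 h1 _ H1 _ H2|c i hc hi].
- by rewrite mulr0; exact: gamma_pos0.
- by rewrite mulrDr; exact: gamma_posD.
have hi1 : (2 * i.+1 <= d.+2)%N by lia.
have := @gamma_pos_basis _ _ _ hc hi1.
have -> : (d.+2 - 2 * i.+1 = d - 2 * i)%N by lia.
by congr gamma_pos; rewrite exprS; ring.
Qed.

Lemma gamma_pos_mul d e f h :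
  gamma_pos d f -> gamma_pos e h -> gamma_pos (d + e) (f * h).
Proof.
move=> Hf Hh; elim: Hf => [|f1 h1 _ H1 _ H2|c i hc hi].
- by rewrite mul0r; exact: gamma_pos0.
- by rewrite mulrDl; exact: gamma_posD.
elim: Hh => [|f1 h1 _ H1 _ H2|c' j hc' hj].
- by rewrite mulr0; exact: gamma_pos0.
- by rewrite mulrDr; exact: gamma_posD.
have hij : (2 * (i + j) <= d + e)%N by lia.
have := @gamma_pos_basis _ _ _ (mulr_ge0 hc hc') hij.
have -> : (d + e - 2 * (i + j) = (d - 2 * i) + (e - 2 * j))%N by lia.
by congr gamma_pos; rewrite polyCM !exprD; ring.
Qed.

Lemma gamma_pos_mulrn d f (k : nat) : gamma_pos d f -> gamma_pos d (k%:R * f).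
Proof.
move=> Hf; elim: k => [|k IH]; first by rewrite mul0r; exact: gamma_pos0.
by rewrite -natr1 mulrDl mul1r; exact: gamma_posD.
Qed.

Lemma gamma_pos_expansion d f : gamma_pos d f ->
  exists g : nat -> int,
    (forall i, (i <= d./2)%N -> 0 <= g i) /\ f = gamma_expansion d g.
Proof.
elim=> [|f1 h1 _ [g1 [G1 E1]] _ [g2 [G2 E2]]|c i hc hi].
- exists (fun=> 0); split=> //; rewrite /gamma_expansion big1 // => j _.
  by rewrite !mul0r.
- exists (fun k => g1 k + g2 k); split=> [k hk|]; first by rewrite addr_ge0 ?G1 ?G2.
  rewrite E1 E2 /gamma_expansion -big_split /=; apply: eq_bigr => j _.
  by rewrite polyCD; ring.
exists (fun k => if k == i then c else 0); split=> [k _|]; first by case: eqP.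
have hi' : (i < d./2.+1)%N by rewrite ltnS -(doubleK i) -mul2n half_leq.
rewrite /gamma_expansion (bigD1 (Ordinal hi')) //= eqxx big1 ?addr0 // => j hj.
case: eqP => [Eji|]; last by rewrite !mul0r.
by case/eqP: hj; apply: val_inj.
Qed.

Lemma size_Plist m : size (Plist m) = m.
Proof. by elim: m => //= m IH; rewrite size_rcons IH. Qed.

Lemma nth_Plist m k : (k < m)%N -> (Plist m)`_k = P k.
Proof.
elim: m => // m IH; rewrite ltnS leq_eqVlt => /orP [/eqP -> //|hk] /=.
by rewrite nth_rcons size_Plist hk IH.
Qed.

Lemma P_Pnext n : P n = Pnext (Plist n).
Proof. by rewrite /P /= nth_rcons size_Plist ltnn eqxx. Qed.

Lemma P3 : P 3 = 1.
Proof. by rewrite P_Pnext /Pnext size_Plist. Qed.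

Lemma P_rec n : (4 <= n)%N ->
  P n = P n.-1 * (1 + 'X) + 'X * \sum_(3 <= i < n.-1)
        ('C(n - 2, i - 1))%:R * (P i * P (n + 1 - i)).
Proof.
move=> hn; rewrite P_Pnext /Pnext size_Plist.
have -> : (n <= 2)%N = false by lia.
have -> : (n == 3%N) = false by apply/eqP; lia.
rewrite nth_Plist; last by lia.
congr (_ + 'X * _); apply: eq_big_nat => i /andP [h1 h2].
by rewrite !nth_Plist //; lia.
Qed.

Lemma gamma_pos_P n : (3 <= n)%N -> gamma_pos (n - 3) (P n).
Proof.
elim/ltn_ind: n => n IH h3.
have [->|h4] := eqVneq n 3%N.
  by have := @gamma_pos_basis 0 1 0 ler01 (leqnn 0); rewrite P3 expr0 !mulr1.
have IHlt k : (3 <= k < n)%N -> gamma_pos (k - 3) (P k).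
  by case/andP=> k3 kn; exact: IH.
rewrite P_rec; last by lia.
rewrite mulrC; apply: gamma_posD.
  have -> : (n - 3 = (n.-1 - 3).+1)%N by lia.
  by apply/gamma_pos_mul1X/IHlt; lia.
have [->|h5] := eqVneq n 4%N; first by rewrite big_geq // mulr0; exact: gamma_pos0.
have -> : (n - 3 = (n - 5).+2)%N by lia.
apply/gamma_pos_mulX; rewrite big_nat_cond; apply: gamma_pos_sum.
move=> i /andP [/andP [i3 iltn] _]; apply: gamma_pos_mulrn.
have -> : (n - 5 = (i - 3) + (n + 1 - i - 3))%N by lia.
by apply: gamma_pos_mul; apply: IHlt; lia.
Qed.

Theorem theorem1p3 (n : nat) : (3 <= n)%N ->
  exists g : nat -> int,
    (forall i, (i <= (n - 3)./2)%N -> 0 <= g i) /\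
    P n = gamma_expansion (n - 3) g.
Proof. by move=> n3; apply/gamma_pos_expansion/gamma_pos_P. Qed.
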